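(* Let $U$ and $V$ be finite-dimensional vector spaces over a field $\mathbb{K}$. (a) Every range-compatible linear map on $\mathcal{L}(U,V)$ is local. (b) If $\dim V>1$, every range-compatible group homomorphism on $\mathcal{L}(U,V)$ is local.
   Context: A map $F:\mathcal{L}(U,V)\to V$ is range-compatible when $F(s)\in\operatorname{im}s$ for all $s$, and local when there is $x\in U$ with $F(s)=s(x)$ for all $s$. *)

(* finite-dimensional vector spaces are vectType K,
   L(U,V) is 'Hom(U,V) (itself a vectType K). *)
From HB Require Import structures.
From mathcomp Require Import all_boot all_order all_algebra.
Set Implicit Arguments. Unset Strict Implicit. Unset Printing Implicit Defensive.
Import GRing.Theory.
Local Open Scope ring_scope.

Definition range_compatible (K : fieldType) (U V : vectType K)
  (F : 'Hom(U, V) -> V) : Prop :=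
  forall s : 'Hom(U, V), F s \in limg s.

Definition local_map (K : fieldType) (U V : vectType K)
  (F : 'Hom(U, V) -> V) : Prop :=
  exists x : U, forall s : 'Hom(U, V), F s = s x.

From HB Require Import structures.
From mathcomp Require Import all_boot all_order all_algebra.
Import GRing.Theory.
Local Open Scope ring_scope.

(* Fix a basis (e_i) of U with coordinate forms phi_i.  Every s in L(U,V)
   decomposes as s = sum_i R_i (s e_i), where R_i y is the rank-one map
   u |-> phi_i(u) y.  For an additive range-compatible F, each map
   g_i : y |-> F (R_i y) is additive on V and sends every y into the line
   K y, since im R_i(y) is contained in K y.  The core lemma says that such
   a "line-preserving" additive g : V -> V is a scalar c *: id, provided g is
   also homogeneous or dim V > 1: two independent vectors force the same
   scalar, and a second independent direction pins down g on each line.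
   Writing g_i = c_i *: id, additivity of F and the decomposition of s give
   F s = sum_i c_i s(e_i) = s (sum_i c_i e_i), so F is local at
   x = sum_i c_i e_i.  Part (a) uses homogeneity, part (b) uses dim V > 1. *)

Set Implicit Arguments.
Unset Strict Implicit.
Unset Printing Implicit Defensive.

Section LinePreservingMaps.

Variables (K : fieldType) (V : vectType K) (g : V -> V).
Hypothesis g_add : {morph g : y z / y + z}.
Hypothesis g_line : forall y, g y \in <[y]>%VS.

Lemma line_preserving0 : g 0 = 0.
Proof. by have [k ->] := vlineP _ _ (g_line 0); rewrite scaler0. Qed.

(* Two independent vectors y, z are scaled by the same factor: otherwise
   g (y + z) could not lie on the line K (y + z). *)
Lemma line_scalar_transfer (c : K) (y z : V) :
  y != 0 -> z \notin <[y]>%VS -> g y = c *: y -> g z = c *: z.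
Proof.
move=> y_nz z_off gy.
have [b gz] := vlineP _ _ (g_line z).
have [d gyz] := vlineP _ _ (g_line (y + z)).
have relation : (c - d) *: y = (d - b) *: z.
  move: gyz; rewrite g_add gy gz scalerDr => sum_eq.
  by apply/eqP; rewrite !scalerBl eq_sym subr_eq addrAC sum_eq addrAC subrr add0r.
have d_eq_b : d = b.
  apply/eqP; rewrite -subr_eq0; apply: contraNT z_off => db_nz.
  have -> : z = ((d - b)^-1 * (c - d)) *: y.
    by rewrite -scalerA relation scalerA mulVf // scale1r.
  by rewrite memvZ ?memv_line ?orbT.
move: relation; rewrite d_eq_b subrr scale0r => /eqP.
rewrite scaler_eq0 (negPf y_nz) orbF subr_eq0 => /eqP c_eq_b.
by rewrite gz c_eq_b.
Qed.

Lemma line_scalar_extend (c : K) (v0 : V) :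
  v0 != 0 -> (forall a, g (a *: v0) = c *: (a *: v0)) ->
  forall y, g y = c *: y.
Proof.
move=> v0_nz g_line_v0 y.
have [/vlineP [a ->] | y_off] := boolP (y \in <[v0]>%VS); first exact: g_line_v0.
by apply: line_scalar_transfer y_off _; rewrite // -[v0]scale1r g_line_v0.
Qed.

(* When dim V > 1, a vector w off the line of v0 carries the scalar of v0
   and transfers it back to every nonzero multiple of v0. *)
Lemma line_scalar_on_line (c : K) (v0 : V) :
  (1 < \dim (fullv : {vspace V}))%N -> v0 != 0 -> g v0 = c *: v0 ->
  forall a, g (a *: v0) = c *: (a *: v0).
Proof.
move=> dimV v0_nz gv0 a.
have [-> | a_nz] := eqVneq a 0; first by rewrite !scale0r scaler0 line_preserving0.
have /subvPn [w _ w_off] : ~~ (fullv <= <[v0]>)%VS.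
  by apply: contraTN dimV => /dimvS; rewrite dim_vline v0_nz -leqNgt.
have w_nz : w != 0 by apply: contraNneq w_off => ->; rewrite mem0v.
apply: (line_scalar_transfer w_nz); last exact: line_scalar_transfer w_off gv0.
apply: contra w_off => /vlineP [b av0_eq].
have b_nz : b != 0.
  apply: contraNneq a_nz => b0; move: av0_eq; rewrite b0 scale0r => /eqP.
  by rewrite scaler_eq0 (negPf v0_nz) orbF.
have -> : w = (b^-1 * a) *: v0 by rewrite -scalerA av0_eq scalerA mulVf // scale1r.
by rewrite memvZ ?memv_line ?orbT.
Qed.

Lemma line_preserving_scalar :
  (forall (a : K) y, g (a *: y) = a *: g y) \/ (1 < \dim (fullv : {vspace V}))%N ->
  exists c : K, forall y, g y = c *: y.
Proof.
move=> hom_or_dim; pose v0 := vpick (fullv : {vspace V}).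
have [v0_0 | v0_nz] := eqVneq v0 0.
  have /eqP V_trivial : (fullv : {vspace V}) == 0%VS by rewrite -vpick0 -/v0 v0_0.
  exists 0 => y; have := memvf y; rewrite V_trivial memv0 => /eqP ->.
  by rewrite line_preserving0 scaler0.
have [c gv0] := vlineP _ _ (g_line v0).
exists c; apply: (line_scalar_extend v0_nz).
case: hom_or_dim => [g_hom a | dimV]; last exact: line_scalar_on_line.
by rewrite g_hom gv0 !scalerA mulrC.
Qed.

End LinePreservingMaps.

Section RankOneMaps.

Variables (K : fieldType) (U V : vectType K).

(* The fixed basis (e_i) of U; coord basisU i is the coordinate form phi_i. *)
Let basisU := vbasis (fullv : {vspace U}).

Definition rank_one_fun (i : 'I_(\dim (fullv : {vspace U}))) (y : V) (u : U) : V :=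
  coord basisU i u *: y.

Lemma rank_one_fun_linear i y : linear (rank_one_fun i y).
Proof. by move=> a u v; rewrite /rank_one_fun linearP scalerDl scalerA. Qed.

HB.instance Definition _ i y :=
  GRing.isLinear.Build K U V *:%R (rank_one_fun i y) (rank_one_fun_linear i y).

Definition rank_one i y : 'Hom(U, V) := linfun (rank_one_fun i y).

Lemma rank_oneE i y u : rank_one i y u = coord basisU i u *: y.
Proof. exact: lfunE. Qed.

Lemma rank_oneD i : {morph rank_one i : y z / y + z}.
Proof. by move=> y z; apply/lfunP => u; rewrite add_lfunE !rank_oneE scalerDr. Qed.

Lemma rank_oneZ i (a : K) y : rank_one i (a *: y) = a *: rank_one i y.
Proof.
by apply/lfunP => u; rewrite scale_lfunE !rank_oneE scalerA mulrC -scalerA.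
Qed.

Lemma rank_one_image i y : (limg (rank_one i y) <= <[y]>)%VS.
Proof.
by apply/subvP => _ /memv_imgP [u _ ->]; rewrite rank_oneE memvZ ?memv_line ?orbT.
Qed.

Lemma rank_one_decomposition (s : 'Hom(U, V)) :
  s = \sum_i rank_one i (s basisU`_i).
Proof.
apply/lfunP => u; rewrite sum_lfunE {1}(coord_vbasis (memvf u)) linear_sum.
by apply: eq_bigr => i _; rewrite rank_oneE linearZ.
Qed.

Lemma local_of_rank_one_scalars (F : {additive 'Hom(U, V) -> V}) :
  (forall i, exists c : K, forall y, F (rank_one i y) = c *: y) -> local_map F.
Proof.
move=> /fin_all_exists [c Fc].
exists (\sum_i c i *: basisU`_i) => s.
rewrite {1}(rank_one_decomposition s) raddf_sum linear_sum.
by apply: eq_bigr => i _; rewrite Fc linearZ.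
Qed.

Lemma range_compatible_local (F : {additive 'Hom(U, V) -> V}) :
  range_compatible F ->
  (forall i (a : K) y, F (rank_one i (a *: y)) = a *: F (rank_one i y))
    \/ (1 < \dim (fullv : {vspace V}))%N ->
  local_map F.
Proof.
move=> F_rc hom_or_dim; apply: local_of_rank_one_scalars => i.
apply: (@line_preserving_scalar K V (fun y => F (rank_one i y))).
- by move=> y z; rewrite /= rank_oneD raddfD.
- by move=> y; apply: subvP (rank_one_image i y) _ (F_rc _).
- by case: hom_or_dim => [F_hom | dimV]; [left => a y; apply: F_hom | right].
Qed.

End RankOneMaps.

Theorem proposition2p5 (K : fieldType) (U V : vectType K) :
  (forall F : {linear 'Hom(U, V) -> V},
      range_compatible F -> local_map F) /\
  ((1 < \dim (fullv : {vspace V}))%N ->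
   forall F : {additive 'Hom(U, V) -> V},
      range_compatible F -> local_map F).
Proof.
split=> [F F_rc | dimV F F_rc]; apply: (range_compatible_local F_rc); last by right.
by left => i a y; rewrite rank_oneZ -[RHS]linearZ.
Qed.
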